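(* Let $G$ be a connected finite simple graph on $n$ vertices. Then $\ell(G)=n-\omega(G)+1$ if and only if $G$ is a WL-graph.
   Context: $\ell(G)$ is the length (number of edges) of a longest induced path in $G$; $\omega(G)$ is the clique number of $G$ (maximum size of a set of pairwise adjacent vertices). WL-graph: a graph $G$ is a WL-graph if there exist positive integers $\ell,\omega$ with $\omega\ge2$ such that $G=P\cup K\cup H$ (union of graphs: union of vertex sets and of edge sets), where (i) $P$ is a path graph with consecutive vertices $v_0,v_1,\dots,v_\ell$; (ii) $K$ is a complete graph on the vertex set $\{v_t,v_{t+1},u_1,\dots,u_{\omega-2}\}$ for some $0\le t<\ell$, with $V(P)\cap V(K)=\{v_t,v_{t+1}\}$; (iii) $H$ is a graph with vertex set $V(P)\cup V(K)$ and edge set contained in $\{\{v_i,u_j\}:0\le i\le\ell,\ 1\le j\le\omega-2\}$. *)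

(* Finite simple graphs as a symmetric irreflexive rel on a finType. *)
From mathcomp Require Import all_boot.
Set Implicit Arguments. Unset Strict Implicit. Unset Printing Implicit Defensive.

Section Graphs.
Variables (T : finType) (e : rel T).

Definition induced_path (s : seq T) : bool :=
  match s with
  | [::] => false
  | x0 :: _ =>
      uniq s &&
      [forall i : 'I_(size s), forall j : 'I_(size s),
          e (nth x0 s i) (nth x0 s j) == ((i.+1 == j :> nat) || (j.+1 == i :> nat))]
  end.

(* ell(G): number of edges of a longest induced path (a path on k+1 vertices
   has length k; such paths have at most #|T| vertices). *)
Definition ell : nat :=
  \max_(k < #|T| | [exists s : k.+1.-tuple T, induced_path s]) k.

Definition clique (A : {set T}) : bool :=
  [forall x in A, forall y in A, (x != y) ==> e x y].

Definition omega : nat := \max_(A : {set T} | clique A) #|A|.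

Definition connected_graph : Prop := forall x y : T, connect e x y.

(* WL-graph, following the definition literally.  Path vertices v 0 .. v l,
   clique-only vertices u 1 .. u (w-2); H is an arbitrary set of edges of the
   form {v_i, u_j}; G = P ∪ K ∪ H. *)
Definition WL_graph : Prop :=
  exists (l w t : nat) (v u : nat -> T) (h : T -> T -> Prop),
    [/\ 0 < l, 2 <= w & t < l] /\
    (forall i j, i <= l -> j <= l -> v i = v j -> i = j) /\
    (forall i j, 1 <= i <= w - 2 -> 1 <= j <= w - 2 -> u i = u j -> i = j) /\
    (* V(P) ∩ V(K) = {v_t, v_{t+1}} *)
    (forall i j, i <= l -> 1 <= j <= w - 2 -> v i <> u j) /\
    (forall x, (exists i, i <= l /\ x = v i) \/ (exists j, 1 <= j <= w - 2 /\ x = u j)) /\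
    (forall x y, h x y -> exists i j, i <= l /\ 1 <= j <= w - 2 /\
                   ((x = v i /\ y = u j) \/ (x = u j /\ y = v i))) /\
    (forall x y, e x y <->
       (exists i, i < l /\ ((x = v i /\ y = v i.+1) \/ (x = v i.+1 /\ y = v i)))
       \/ (x <> y /\
           (x = v t \/ x = v t.+1 \/ exists j, 1 <= j <= w - 2 /\ x = u j) /\
           (y = v t \/ y = v t.+1 \/ exists j, 1 <= j <= w - 2 /\ y = u j))
       \/ h x y \/ h y x).

End Graphs.

(* An induced path and a clique share at most two vertices, since three
   pairwise adjacent vertices of an induced path would need pairwise
   consecutive positions.  Counting the vertices of a longest induced path and
   of a maximum clique therefore gives ell + 1 + omega <= n + 2 for every
   graph.  Equality forces such a path s and clique A to cover all vertices
   and to share exactly two vertices, which are consecutive on s: this is the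
   WL decomposition, with H the edges between s and A \ s.  Conversely a
   WL-graph contains the induced path P and the clique K, and has at most
   ell + omega - 1 vertices. *)
From mathcomp Require Import all_boot zify.
Set Implicit Arguments. Unset Strict Implicit. Unset Printing Implicit Defensive.

Section InducedPathsAndCliques.
Variables (T : finType) (e : rel T).

Lemma induced_path_uniq s : induced_path e s -> uniq s.
Proof. by case: s => //= a s /andP[]. Qed.

Lemma induced_path_adj s x0 i j : induced_path e s -> i < size s -> j < size s ->
  e (nth x0 s i) (nth x0 s j) = (i.+1 == j) || (j.+1 == i).
Proof.
case: s => //= a s /andP[_ /forallP adj] lt_i lt_j.
have /forallP /(_ (Ordinal lt_j)) /eqP /= := adj (Ordinal lt_i).
by rewrite -!(set_nth_default a x0 (s := a :: s)).
Qed.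

Lemma induced_path_nth s x0 : s != [::] -> uniq s ->
  (forall i j, i < size s -> j < size s ->
     e (nth x0 s i) (nth x0 s j) = (i.+1 == j) || (j.+1 == i)) ->
  induced_path e s.
Proof.
case: s => // a s _ /= uniq_s adj; rewrite uniq_s /=.
apply/forallP => i; apply/forallP => j.
by rewrite !(set_nth_default x0 a) // adj.
Qed.

Lemma clique_adj A x y : clique e A -> x \in A -> y \in A -> x != y -> e x y.
Proof.
move=> /forallP /(_ x) /implyP clique_x xA.
by move: (clique_x xA) => /forallP /(_ y) /implyP adj /adj /implyP.
Qed.

Lemma not_pairwise_consecutive3 i j k :
  (i.+1 == j) || (j.+1 == i) -> (j.+1 == k) || (k.+1 == j) ->
  (k.+1 == i) || (i.+1 == k) -> False.
Proof. by case/orP=> /eqP ij /orP[] /eqP jk /orP[] /eqP ki; lia. Qed.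

Lemma card_induced_path_clique s A : induced_path e s -> clique e A ->
  #|[set x in s] :&: A| <= 2.
Proof.
move=> path_s clique_A; rewrite leqNgt; apply/negP.
case/card_gt2P => x [y [z [[]]]]; rewrite !inE.
move=> /andP[xs xA] /andP[ys yA] /andP[zs zA] [nxy nyz nzx].
have consecutive a b : a \in s -> b \in s -> a \in A -> b \in A -> a != b ->
    ((index a s).+1 == index b s) || ((index b s).+1 == index a s).
  move=> aS bS aA bA nab.
  by rewrite -(induced_path_adj a path_s) ?index_mem ?nth_index ?(clique_adj clique_A).
exact: not_pairwise_consecutive3 (consecutive _ _ xs ys xA yA nxy)
  (consecutive _ _ ys zs yA zA nyz) (consecutive _ _ zs xs zA xA nzx).
Qed.

Lemma size_add_card_clique s A : induced_path e s -> clique e A ->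
  size s + #|A| = #|[set x in s] :|: A| + #|[set x in s] :&: A|.
Proof.
move=> /induced_path_uniq /card_uniqP size_s _.
by rewrite cardsUI cardsE size_s.
Qed.

Lemma size_induced_path_le_ell s : induced_path e s -> (size s).-1 <= ell e.
Proof.
case: s => // a s path_s /=.
have lt_s : size s < #|T|.
  by move: (induced_path_uniq path_s) => /card_uniqP /= <-; exact: max_card.
apply: (@leq_bigmax_cond _ _ (fun k : 'I_#|T| => nat_of_ord k) (Ordinal lt_s)).
by apply/existsP; exists (in_tuple (a :: s)).
Qed.

Lemma card_clique_le_omega A : clique e A -> #|A| <= omega e.
Proof. exact: (@leq_bigmax_cond _ _ (fun A : {set T} => #|A|) A). Qed.

Lemma omega_le_card : omega e <= #|T|.
Proof. by apply/bigmax_leqP => A _; exact: max_card. Qed.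

Lemma ell_witness : 0 < ell e -> exists2 s, induced_path e s & size s = (ell e).+1.
Proof.
pose P (k : 'I_#|T|) := [exists s : k.+1.-tuple T, induced_path e s].
have [P0|P_gt0] := posnP #|P|.
  rewrite /ell big_pred0 // => k.
  by have := card0_eq P0 k; rewrite unfold_in.
have [k] := eq_bigmax_cond (fun k : 'I_#|T| => nat_of_ord k) P_gt0.
rewrite unfold_in => /existsP [s path_s] ell_k _.
by exists s; rewrite // size_tuple /ell ell_k.
Qed.

Lemma omega_witness : exists2 A, clique e A & #|A| = omega e.
Proof.
have P_gt0 : 0 < #|clique e|.
  by apply/card_gt0P; exists set0; rewrite unfold_in; apply/forallP => z; rewrite inE.
have [A clique_A eqA] := eq_bigmax_cond (fun A : {set T} => #|A|) P_gt0.
by exists A; rewrite // /omega eqA.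
Qed.

Lemma ell_add_omega_le : ell e + omega e <= #|T| + 1.
Proof.
have := omega_le_card; have [-> | ell_gt0] := posnP (ell e); first by lia.
have [s path_s size_s] := ell_witness ell_gt0.
have [A clique_A <-] := omega_witness.
have := size_add_card_clique path_s clique_A.
have := card_induced_path_clique path_s clique_A.
have := max_card ([set x in s] :|: A).
by lia.
Qed.

Lemma extremal_path_clique_cover s A :
  induced_path e s -> clique e A -> size s + #|A| = #|T| + 2 ->
  #|[set x in s] :&: A| = 2 /\ forall z, z \in s \/ z \in A.
Proof.
move=> path_s clique_A sum_eq.
have := size_add_card_clique path_s clique_A.
have := card_induced_path_clique path_s clique_A.
have := max_card ([set x in s] :|: A).
move=> le_union le_meet card_eq; split; first by lia.
have : [set x in s] :|: A = [set: T] by apply/eqP; rewrite eqEcard subsetT cardsT; lia.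
by move=> /setP cover z; move: (cover z); rewrite !inE => /orP.
Qed.

End InducedPathsAndCliques.

Section WLGraphExtremal.
Variables (T : finType) (e : rel T) (l w t : nat) (v u : nat -> T) (h : T -> T -> Prop).
Hypotheses (two_le_w : 2 <= w) (t_lt_l : t < l)
  (v_inj : forall i j, i <= l -> j <= l -> v i = v j -> i = j)
  (u_inj : forall i j, 1 <= i <= w - 2 -> 1 <= j <= w - 2 -> u i = u j -> i = j)
  (v_neq_u : forall i j, i <= l -> 1 <= j <= w - 2 -> v i <> u j)
  (cover : forall x,
     (exists i, i <= l /\ x = v i) \/ (exists j, 1 <= j <= w - 2 /\ x = u j))
  (h_edges : forall x y, h x y -> exists i j, i <= l /\ 1 <= j <= w - 2 /\
     ((x = v i /\ y = u j) \/ (x = u j /\ y = v i)))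
  (edgeP : forall x y, e x y <->
     (exists i, i < l /\ ((x = v i /\ y = v i.+1) \/ (x = v i.+1 /\ y = v i)))
     \/ (x <> y /\
         (x = v t \/ x = v t.+1 \/ exists j, 1 <= j <= w - 2 /\ x = u j) /\
         (y = v t \/ y = v t.+1 \/ exists j, 1 <= j <= w - 2 /\ y = u j))
     \/ h x y \/ h y x).

Lemma wl_clique_path_vertex i x : i <= l ->
  (x = v t \/ x = v t.+1 \/ exists j, 1 <= j <= w - 2 /\ x = u j) ->
  x = v i -> i = t \/ i = t.+1.
Proof.
have le_tl : t <= l by lia.
move=> le_il + x_vi; rewrite x_vi => -[/v_inj|[/v_inj|[j [lt_j /v_neq_u]]]].
- by move=> /(_ le_il le_tl); left.
- by move=> /(_ le_il t_lt_l); right.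
- by case/(_ le_il lt_j).
Qed.

Lemma wl_h_not_path i j : i <= l -> j <= l -> ~ h (v i) (v j).
Proof.
move=> le_il le_jl /h_edges [i' [j' [_ [lt_j' [[_ vj] | [vi _]]]]]].
- exact: v_neq_u vj.
- exact: v_neq_u vi.
Qed.

Lemma wl_path_adj i j : i <= l -> j <= l ->
  e (v i) (v j) = (i.+1 == j) || (j.+1 == i).
Proof.
move=> le_il le_jl; apply/idP/idP.
- case/edgeP => [[k [lt_kl [[vi vj] | [vi vj]]]] | [[neq [xK yK]] | hij]].
  + have le_kl : k <= l by lia.
    by rewrite (v_inj le_il le_kl vi) (v_inj le_jl lt_kl vj) eqxx.
  + have le_kl : k <= l by lia.
    by rewrite (v_inj le_il lt_kl vi) (v_inj le_jl le_kl vj) eqxx orbT.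
  + have := wl_clique_path_vertex le_il xK erefl.
    have := wl_clique_path_vertex le_jl yK erefl.
    by case=> ? [] ?; subst; rewrite ?eqxx ?orbT //; case: neq.
  + by case: hij => [/(wl_h_not_path le_il le_jl) | /(wl_h_not_path le_jl le_il)].
- case/orP => /eqP eq_ij; subst; apply/edgeP; left.
  + by exists i; split; [lia | left].
  + by exists j; split; [lia | right].
Qed.

Lemma wl_induced_path : induced_path e (map v (iota 0 l.+1)).
Proof.
apply: (@induced_path_nth _ _ _ (v 0)) => //.
- rewrite map_inj_in_uniq ?iota_uniq // => i j; rewrite !mem_iota /= => lt_i lt_j.
  by apply: v_inj; lia.
- move=> i j; rewrite size_map size_iota => lt_i lt_j.
  by rewrite !(nth_map 0) ?size_iota // !nth_iota // wl_path_adj //; lia.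
Qed.

Definition wl_clique_vertex (i : 'I_w) : T :=
  if i == 0 :> nat then v t else if i == 1 :> nat then v t.+1 else u i.-1.

Lemma wl_clique_vertexP (i : 'I_w) :
  [\/ i = 0 :> nat /\ wl_clique_vertex i = v t,
      i = 1 :> nat /\ wl_clique_vertex i = v t.+1
    | 1 <= i.-1 <= w - 2 /\ wl_clique_vertex i = u i.-1].
Proof.
rewrite /wl_clique_vertex; case: eqP => [|i_neq0]; first by constructor 1.
case: eqP => [|i_neq1]; first by constructor 2.
by constructor 3; split => //; have := ltn_ord i; lia.
Qed.

Lemma wl_clique_vertex_inj : injective wl_clique_vertex.
Proof.
have le_tl : t <= l by lia.
move=> i j eq_ij; apply: val_inj => /=.
case: (wl_clique_vertexP i) => -[lt_i vi]; case: (wl_clique_vertexP j) => -[lt_j vj];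
  rewrite vi vj in eq_ij; try lia.
- by have := v_inj le_tl t_lt_l eq_ij; lia.
- by case: (v_neq_u le_tl lt_j).
- by have := v_inj t_lt_l le_tl eq_ij; lia.
- by case: (v_neq_u t_lt_l lt_j).
- by case: (v_neq_u le_tl lt_i).
- by case: (v_neq_u t_lt_l lt_i).
- by have := u_inj lt_i lt_j eq_ij; lia.
Qed.

Lemma wl_clique : clique e [set wl_clique_vertex i | i in 'I_w].
Proof.
have in_K i : let x := wl_clique_vertex i in
    x = v t \/ x = v t.+1 \/ exists j, 1 <= j <= w - 2 /\ x = u j.
  by case: (wl_clique_vertexP i) => -[lt_i ->]; [left | right; left | right; right; exists i.-1].
apply/forallP => x; apply/implyP => /imsetP [i _ ->].
apply/forallP => y; apply/implyP => /imsetP [j _ ->].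
apply/implyP => /eqP neq; apply/edgeP; right; left.
by split; [| split; [exact: in_K | exact: in_K]].
Qed.

Lemma card_wl_clique : #|[set wl_clique_vertex i | i in 'I_w]| = w.
Proof. by rewrite card_imset ?card_ord //; exact: wl_clique_vertex_inj. Qed.

Definition wl_vertex (k : 'I_(l.+1 + (w - 2))) : T := if k <= l then v k else u (k - l).

Lemma wl_card_le : #|T| <= l + w - 1.
Proof.
have : #|[set wl_vertex k | k in 'I_(l.+1 + (w - 2))]| <= l.+1 + (w - 2).
  by have := leq_imset_card wl_vertex 'I_(l.+1 + (w - 2)); rewrite card_ord.
suff -> : [set wl_vertex k | k in 'I_(l.+1 + (w - 2))] = [set: T] by rewrite cardsT; lia.
apply/eqP; rewrite eqEsubset subsetT /=; apply/subsetP => x _.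
case: (cover x) => [[i [le_il ->]] | [j [lt_j ->]]].
- have lt_i : i < l.+1 + (w - 2) by lia.
  by apply/imsetP; exists (Ordinal lt_i); rewrite // /wl_vertex /= le_il.
- have lt_lj : l + j < l.+1 + (w - 2) by lia.
  apply/imsetP; exists (Ordinal lt_lj); rewrite // /wl_vertex /=.
  have -> : (l + j <= l) = false by lia.
  by rewrite addKn.
Qed.

Lemma wl_ell_eq : ell e = #|T| - omega e + 1.
Proof.
have := ell_add_omega_le e; have := omega_le_card e.
have := size_induced_path_le_ell wl_induced_path; rewrite size_map size_iota /=.
have := card_clique_le_omega wl_clique; rewrite card_wl_clique.
have := wl_card_le; have := two_le_w.
by move: (ell e) (omega e) #|T|; lia.
Qed.

End WLGraphExtremal.

Section ExtremalPathCliqueWL.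
Variables (T : finType) (e : rel T) (s : seq T) (A : {set T}) (x y : T).
Hypotheses (esym : symmetric e) (eirr : irreflexive e)
  (path_s : induced_path e s) (clique_A : clique e A)
  (cover : forall z, z \in s \/ z \in A)
  (xs : x \in s) (ys : y \in s) (xA : x \in A) (yA : y \in A) (neq_xy : x != y)
  (card_meet : #|[set z in s] :&: A| = 2).

Let l := (size s).-1.
Let w := #|A|.
Let rest := A :\: [set z in s].
Let v i := nth x s i.
Let u j := nth x (enum rest) j.-1.
Let t := minn (index x s) (index y s).
Let h a b := [&& a \in s, b \in rest & e a b].

Lemma size_enum_rest : size (enum rest) = w - 2.
Proof. by rewrite -cardE /rest /w -(cardsID [set z in s] A) setIC card_meet; lia. Qed.

Lemma two_le_card_clique : 2 <= w.
Proof. by rewrite /w -card_meet; apply/subset_leq_card/subsetIr. Qed.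

Lemma size_path_gt0 : 0 < size s.
Proof. by case: s xs. Qed.

Lemma path_vertex_of_mem a : a \in s -> exists i, i <= l /\ a = v i.
Proof.
move=> a_s; exists (index a s); split; last by rewrite /v nth_index.
have : index a s < size s by rewrite index_mem.
by rewrite /l; lia.
Qed.

Lemma rest_vertex_of_mem a : a \in rest -> exists j, 1 <= j <= w - 2 /\ a = u j.
Proof.
rewrite -mem_enum => a_rest; exists (index a (enum rest)).+1.
split; last by rewrite /u nth_index.
have : index a (enum rest) < size (enum rest) by rewrite index_mem.
by rewrite size_enum_rest; lia.
Qed.

Lemma mem_path_or_rest a : a \in s \/ a \in rest.
Proof.
have [a_s | a_ns] := boolP (a \in s); [by left | right].
by case: (cover a) => a_A; [rewrite a_A in a_ns | rewrite !inE a_ns].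
Qed.

Lemma lt_size_path i : i <= l -> i < size s.
Proof. by rewrite -ltnS prednK // size_path_gt0. Qed.

Lemma path_vertex_mem i : i <= l -> v i \in s.
Proof. by move/lt_size_path; apply: mem_nth. Qed.

Lemma rest_vertex_mem j : 1 <= j <= w - 2 -> u j \in rest.
Proof. by move=> lt_j; rewrite -mem_enum; apply: mem_nth; rewrite size_enum_rest; lia. Qed.

Lemma meet_consecutive :
  (index x s).+1 == index y s \/ (index y s).+1 == index x s.
Proof.
apply/orP; rewrite -(induced_path_adj x path_s) ?index_mem // !nth_index //.
exact: clique_adj clique_A xA yA neq_xy.
Qed.

Lemma t_lt_path_length : t < l.
Proof.
have : index x s < size s by rewrite index_mem.
have : index y s < size s by rewrite index_mem.
by case: meet_consecutive => /eqP; rewrite /t /l; lia.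
Qed.

Lemma meet_path_vertices : v t \in A /\ v t.+1 \in A.
Proof.
rewrite /v /t; case: meet_consecutive => /eqP eq_idx.
- by rewrite (_ : minn _ _ = index x s) ?eq_idx ?nth_index //; lia.
- by rewrite (_ : minn _ _ = index y s) ?eq_idx ?nth_index //; lia.
Qed.

Lemma edge_cases a b : e a b ->
  (exists i, i < l /\ ((a = v i /\ b = v i.+1) \/ (a = v i.+1 /\ b = v i)))
  \/ (a <> b /\
      (a = v t \/ a = v t.+1 \/ exists j, 1 <= j <= w - 2 /\ a = u j) /\
      (b = v t \/ b = v t.+1 \/ exists j, 1 <= j <= w - 2 /\ b = u j))
  \/ h a b \/ h b a.
Proof.
move=> e_ab; case: (mem_path_or_rest a) => a_s; case: (mem_path_or_rest b) => b_s.
- move: e_ab.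
  have [i [le_il ->]] := path_vertex_of_mem a_s.
  have [j [le_jl ->]] := path_vertex_of_mem b_s.
  rewrite /v induced_path_adj ?lt_size_path //.
  case/orP => /eqP eq_ij; left.
  + by exists i; rewrite -eq_ij in le_jl *; split; last left.
  + by exists j; rewrite -eq_ij in le_il *; split; last right.
- by right; right; left; rewrite /h a_s b_s e_ab.
- by right; right; right; rewrite /h a_s b_s esym e_ab.
- right; left; split; first by move=> eq_ab; move: e_ab; rewrite eq_ab eirr.
  by split; right; right; apply: rest_vertex_of_mem.
Qed.

Lemma edge_of_cases a b :
  (exists i, i < l /\ ((a = v i /\ b = v i.+1) \/ (a = v i.+1 /\ b = v i)))
  \/ (a <> b /\
      (a = v t \/ a = v t.+1 \/ exists j, 1 <= j <= w - 2 /\ a = u j) /\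
      (b = v t \/ b = v t.+1 \/ exists j, 1 <= j <= w - 2 /\ b = u j))
  \/ h a b \/ h b a -> e a b.
Proof.
have [vt_A vt1_A] := meet_path_vertices.
have in_A c : (c = v t \/ c = v t.+1 \/ exists j, 1 <= j <= w - 2 /\ c = u j) -> c \in A.
  case=> [-> | [-> | [j [lt_j ->]]]] //.
  by have := rest_vertex_mem lt_j; rewrite inE => /andP[].
case=> [[i [lt_il [[-> ->] | [-> ->]]]] | [[neq_ab [aK bK]] | [/and3P[_ _ //] | /and3P[_ _]]]].
- by rewrite /v induced_path_adj ?eqxx //; apply: lt_size_path => //; exact: ltnW.
- by rewrite /v induced_path_adj ?eqxx ?orbT //; apply: lt_size_path => //; exact: ltnW.
- by apply: (clique_adj clique_A); [exact: in_A | exact: in_A | apply/eqP].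
- by rewrite esym.
Qed.

Lemma extremal_path_clique_WL : WL_graph e.
Proof.
have lt_tl := t_lt_path_length.
exists l, w, t, v, u, h.
split; first by split; [lia | exact: two_le_card_clique | done].
split.
  move=> i j /lt_size_path lt_i /lt_size_path lt_j /eqP.
  by rewrite /v nth_uniq ?(induced_path_uniq path_s) // => /eqP.
split.
  move=> i j lt_i lt_j /eqP.
  have lt_i' : i.-1 < size (enum rest) by rewrite size_enum_rest; lia.
  have lt_j' : j.-1 < size (enum rest) by rewrite size_enum_rest; lia.
  by rewrite /u nth_uniq ?enum_uniq // => /eqP; lia.
split.
  move=> i j le_il lt_j eq_vu; have /setDP [_] := rest_vertex_mem lt_j.
  by rewrite -eq_vu inE => /negP; apply; exact: path_vertex_mem.
split.
  by move=> a; case: (mem_path_or_rest a) => [/path_vertex_of_mem | /rest_vertex_of_mem]; tauto.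
split.
  move=> a b /and3P [a_s b_rest _].
  have [i [le_il ->]] := path_vertex_of_mem a_s.
  have [j [lt_j ->]] := rest_vertex_of_mem b_rest.
  by exists i, j; do 2 split => //; left.
by move=> a b; split; [exact: edge_cases | exact: edge_of_cases].
Qed.

End ExtremalPathCliqueWL.

Theorem theorem3p3 (T : finType) (e : rel T)
  (esym : symmetric e) (eirr : irreflexive e)
  (econn : connected_graph e) :
  ell e = #|T| - omega e + 1 <-> WL_graph e.
Proof.
split=> [ell_eq | [l [w [t [v [u [h [[_ two_le_w lt_tl] [v_inj [u_inj [v_neq_u [cover [h_edges edgeP]]]]]]]]]]]]].
- have ell_gt0 : 0 < ell e by have := omega_le_card e; lia.
  have [s path_s size_s] := ell_witness ell_gt0.
  have [A clique_A card_A] := omega_witness e.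
  have [card_meet cover] : #|[set z in s] :&: A| = 2 /\ forall z, z \in s \/ z \in A.
    by apply: extremal_path_clique_cover => //; have := omega_le_card e; lia.
  have /card_gt1P [x [y [+ + neq_xy]]] : 1 < #|[set z in s] :&: A| by rewrite card_meet.
  rewrite !inE => /andP [xs xA] /andP [ys yA].
  exact: (extremal_path_clique_WL esym eirr path_s clique_A cover xs ys xA yA neq_xy card_meet).
- exact: (wl_ell_eq two_le_w lt_tl v_inj u_inj v_neq_u cover h_edges edgeP).
Qed.
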